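(* Let $\mathbb{F}\in\{\mathbb{R},\mathbb{C}\}$ and let $X$ be a semiprime Banach algebra over $\mathbb{F}$ with unit element $\mathbf{1}$. Let $h:X\to X$ and $\phi,\psi:X^2\to[0,\infty)$ satisfy $$\|h(xyx)-h(x)yx-xh(y)x-xyh(x)\|\le\psi(x,y),$$ $$\|h(\lambda a x+by)-\lambda A h(x)-Bh(y)\|\le\phi(x,y)$$ for all $x,y\in X$ and all $\lambda\in\Lambda$, where $a,b,A,B\in\mathbb{F}$ are fixed with $ab\neq0$ and $\Lambda\subseteq\mathbb{F}$ is nonempty. Assume there is $\xi\in\Lambda\setminus\{0\}$ such that $d:=\xi A+B=\xi a+b$ satisfies $d\neq0$, $d\neq1$, and that for all $x,y\in X$: $$\Phi(x):=\sum_{k=0}^{\infty}|d|^{-k-1}\phi(d^kx,d^kx)<\infty,\qquad \liminf_{k\to\infty}|d|^{-k}\phi(d^kx,d^ky)=0,$$ $$\liminf_{k\to\infty}|d|^{-3k}\psi(d^kx,d^ky)=0,\qquad \liminf_{k\to\infty}|d|^{-2k}\psi(d^kx,y)=0.$$ Then $h$ is a derivation. Furthermore, if $\Lambda$ has a bounded subset $\Lambda_0\in\mathcal{B}_{\mathbb{F}}$, then $h$ is a linear derivation.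
   Context: An algebra $X$ is semiprime if $aXa=\{0\}$ for some $a\in X$ implies $a=0$. A derivation is an additive map $D:X\to X$ with $D(xy)=D(x)y+xD(y)$ for all $x,y\in X$; it is linear if moreover $D(\lambda x)=\lambda D(x)$ for all scalars $\lambda$ and $x\in X$. $\mathcal{B}_{\mathbb{F}}$ denotes the family of all sets $\Lambda\subseteq\mathbb{F}$ such that every additive function $f:\mathbb{F}\to X$ which is bounded on $\Lambda$ is continuous. *)

From HB Require Import structures.
From mathcomp Require Import all_boot all_order all_algebra.
From mathcomp Require Import all_classical all_reals all_analysis.
From mathcomp Require Import complex.
Set Implicit Arguments. Unset Strict Implicit. Unset Printing Implicit Defensive.
Import Order.TTheory GRing.Theory Num.Theory.
Import numFieldNormedType.Exports.
Local Open Scope classical_set_scope.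
Local Open Scope ring_scope.

Definition RC (R : realType) (b : bool) : numFieldType :=
  if b then ((complex R : numClosedFieldType) : numFieldType)
  else (R : numFieldType).

(* real part / identity: turns the (real) value of a norm into an element of R *)
Definition reRC (R : realType) (b : bool) : RC R b -> R :=
  match b return RC R b -> R with
  | true => fun z => complex.Re z
  | false => fun r => r
  end.

Record banach_algebra (K : numFieldType) (X : completeNormedModType K)
    (mul : X -> X -> X) (one : X) : Prop := BanachAlgebraAxioms {
  ba_mulA : forall x y z, mul x (mul y z) = mul (mul x y) z;
  ba_mul1l : forall x, mul one x = x;
  ba_mul1r : forall x, mul x one = x;
  ba_mulDl : forall x y z, mul (x + y) z = mul x z + mul y z;
  ba_mulDr : forall x y z, mul x (y + z) = mul x y + mul x z;
  ba_scalerAl : forall (k : K) x y, mul (k *: x) y = k *: mul x y;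
  ba_scalerAr : forall (k : K) x y, mul x (k *: y) = k *: mul x y;
  ba_normM : forall x y, `|mul x y| <= `|x| * `|y|
}.

Section Defs.
Variables (R : realType) (b : bool) (X : completeNormedModType (RC R b))
  (mul : X -> X -> X).
Local Notation "x * y" := (mul x y) : ring_scope.

Definition rnorm (x : X) : R := reRC `|x|.
Definition rabs (z : RC R b) : R := reRC `|z|.

Definition semiprime : Prop :=
  forall a : X, (forall x : X, a * x * a = 0) -> a = 0.

Definition derivation (D : X -> X) : Prop :=
  (forall x y, D (x + y) = D x + D y) /\
  (forall x y, D (x * y) = D x * y + x * D y).

Definition linear_derivation (D : X -> X) : Prop :=
  derivation D /\ (forall (l : RC R b) (x : X), D (l *: x) = l *: D x).

Definition in_BF (L : set (RC R b)) : Prop :=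
  forall f : RC R b -> X,
    (forall s t, f (s + t) = f s + f t) ->
    (exists M : R, forall l, L l -> rnorm (f l) <= M) ->
    continuous f.

Definition bounded_scalars (L : set (RC R b)) : Prop :=
  exists M : R, forall l, L l -> rabs l <= M.

End Defs.

From HB Require Import structures.
From mathcomp Require Import all_boot all_order all_algebra.
From mathcomp Require Import all_classical all_reals all_analysis.
From mathcomp Require Import complex.
Import Order.TTheory GRing.Theory Num.Theory.
Import numFieldNormedType.Exports.
Local Open Scope classical_set_scope.
Local Open Scope ring_scope.
From Stdlib Require Ncring Ncring_tac.
From mathcomp Require Import lra zify.

(* The increments of [hyers n z = d^-n h(d^n z)] are bounded by the summable
   terms [|d|^(-n-1) phi(d^n z, d^n z)], so [hlim z = lim_n hyers n z] exists.
   Along indices where the liminf conditions make the error terms small, the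
   [psi]-estimate shows that [hlim] satisfies the Jordan triple identity, both
   with [hlim y] and with [h y] in the middle slot; at [x = 1] these two
   identities force [h = hlim].  The [phi]-estimate then makes the functional
   equation exact, so [h] is additive, and an additive Jordan triple derivation
   of a 2-torsion free semiprime ring is a derivation (Bresar).  For linearity,
   [m |-> h (m 1)] is an additive derivation of the scalar field that is
   bounded on [Lam0], hence continuous; it vanishes on the rationals, so on the
   reals, and on [i] since [2 i h (i 1) = h (-1) = 0]; finally
   [h (m x) = h (m 1) x + m h x]. *)

Section JordanTripleDerivation.
Variables (V : zmodType) (mul : V -> V -> V) (one : V).
Local Notation "x * y" := (mul x y) : ring_scope.
Hypothesis mulA : forall x y z, x * (y * z) = x * y * z.
Hypothesis mul1l : forall x, one * x = x.
Hypothesis mul1r : forall x, x * one = x.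
Hypothesis mulDl : forall x y z, (x + y) * z = x * z + y * z.
Hypothesis mulDr : forall x y z, x * (y + z) = x * y + x * z.

#[local] Instance ring_ops :
  @Ncring.Ring_ops V 0 one +%R mul (fun x y => x - y) -%R (@eq V) := {}.
#[local] Instance ring_laws : Ncring.Ring (Ro := ring_ops).
Proof.
constructor; try exact _; intros;
  solve [ apply: addrC | apply: addrA | apply: mulA | apply: mulDl | apply: mulDr
        | apply: mul1l | apply: mul1r | apply: add0r | apply: subrr | reflexivity].
Qed.

Ltac ncr := Ncring_tac.non_commutative_ring.

Hypothesis mul_semiprime : forall a, (forall x, a * x * a = 0) -> a = 0.
Hypothesis two_torsion_free : forall x : V, x + x = 0 -> x = 0.
Variable D : V -> V.
Hypothesis DD : forall x y, D (x + y) = D x + D y.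
Hypothesis D_triple : forall x y, D (x * y * x) = D x * y * x + x * D y * x + x * y * D x.

Lemma subr0_of_eq {u v : V} : u = v -> u - v = 0.
Proof. by move=> ->; rewrite subrr. Qed.

Lemma D0 : D 0 = 0.
Proof. by apply: (addrI (D 0)); rewrite -DD !addr0. Qed.

Lemma DN x : D (- x) = - D x.
Proof. by apply/eqP; rewrite -addr_eq0 -DD addNr D0. Qed.

Lemma DB x y : D (x - y) = D x - D y.
Proof. by rewrite DD DN. Qed.

Lemma D1 : D one = 0.
Proof.
apply: two_torsion_free; have := D_triple one one; rewrite !mul1l.
by move=> /esym/subr0_of_eq; apply: etrans; ncr.
Qed.

Lemma D_jordan x y : D (x * y + y * x) = D x * y + x * D y + D y * x + y * D x.
Proof.
have e : x * y * x + (x * y + y * x) + y = (x + one) * y * (x + one) by ncr.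
apply: (addrI (D (x * y * x))); apply: (addIr (D y)).
by rewrite -!DD e !D_triple DD D1 addr0; ncr.
Qed.

Lemma D_triple_lin x y z : D (x * y * z + z * y * x) =
  D x * y * z + x * D y * z + x * y * D z + D z * y * x + z * D y * x + z * y * D x.
Proof.
have e : x * y * x + (x * y * z + z * y * x) + z * y * z = (x + z) * y * (x + z) by ncr.
apply: (addrI (D (x * y * x))); apply: (addIr (D (z * y * z))).
by rewrite -!DD e !D_triple DD; ncr.
Qed.

Definition defect a b := D (a * b) - D a * b - a * D b.
Definition comm a b := a * b - b * a.

Lemma defectC a b : defect b a = - defect a b.
Proof.
apply/eqP; rewrite -addr_eq0; apply/eqP.
have := subr0_of_eq (D_jordan a b); rewrite DD; apply: etrans; rewrite /defect; ncr.
Qed.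

Lemma defectDl a c b : defect (a + c) b = defect a b + defect c b.
Proof.
rewrite /defect; have -> : (a + c) * b = a * b + c * b by ncr.
rewrite !DD; ncr.
Qed.

Lemma defectDr a b c : defect a (b + c) = defect a b + defect a c.
Proof.
rewrite /defect; have -> : a * (b + c) = a * b + a * c by ncr.
rewrite !DD; ncr.
Qed.

Lemma commDl a c b : comm (a + c) b = comm a b + comm c b.
Proof. rewrite /comm; ncr. Qed.

Lemma commDr a b c : comm a (b + c) = comm a b + comm a c.
Proof. rewrite /comm; ncr. Qed.

(* Expand [D (ab x ba + ba x ab)] by [D_triple_lin], and again as
   [D (a (bxb) a) + D (b (axa) b)] by [D_triple]. *)
Lemma defect_comm_sym a b x :
  defect a b * x * comm a b + comm a b * x * defect a b = 0.
Proof.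
have e1 := D_triple_lin (a * b) x (b * a).
have e2 : D (a * b * x * (b * a) + b * a * x * (a * b)) =
    D (a * (b * x * b) * a) + D (b * (a * x * a) * b).
  by rewrite -DD; congr D; ncr.
rewrite e2 !D_triple in e1.
have W : defect a b * x * (b * a) + (a * b) * x * defect b a
    + defect b a * x * (a * b) + (b * a) * x * defect a b = 0.
  by move/esym/subr0_of_eq: e1; apply: etrans; rewrite /defect; ncr.
apply/eqP; rewrite -oppr_eq0; apply/eqP; apply: etrans W.
by rewrite defectC /comm; ncr.
Qed.

Lemma semiprime_sym0 u v :
  (forall x, u * x * v + v * x * u = 0) -> forall x, u * x * v = 0.
Proof.
move=> uv0 x; apply: mul_semiprime => y; apply: two_torsion_free.
have -> : u * x * v * y * (u * x * v) + u * x * v * y * (u * x * v) =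
    u * x * (u * y * v + v * y * u) * x * v
    - (u * (x * u * y) * v + v * (x * u * y) * u) * x * v
    + (u * x * v + v * x * u) * y * (u * x * v) by ncr.
by rewrite !uv0; ncr.
Qed.

Lemma defect_x_comm a b x : defect a b * x * comm a b = 0.
Proof. by apply: semiprime_sym0; apply: defect_comm_sym. Qed.

Lemma comm_x_defect a b x : comm a b * x * defect a b = 0.
Proof. by apply: semiprime_sym0 => y; rewrite addrC; apply: defect_comm_sym. Qed.

Lemma semiprime_sum0 {p q} r s :
  (forall x, p * x * q + r * x * s = 0) -> (forall y, s * y * p = 0) ->
  forall x, p * x * q = 0.
Proof.
move=> pqrs0 sp0 x; apply: mul_semiprime => y.
have -> : p * x * q * y * (p * x * q) =
    (p * x * q + r * x * s) * y * (p * x * q) - r * x * (s * y * p) * x * q by ncr.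
by rewrite pqrs0 sp0; ncr.
Qed.

Lemma defect_x_comm_l a b c x : defect a b * x * comm c b = 0.
Proof.
apply: (semiprime_sum0 (defect c b) (comm a b)) => [{}x|y]; last exact: comm_x_defect.
apply: etrans (_ : (defect a b + defect c b) * x * (comm a b + comm c b)
    - defect a b * x * comm a b - defect c b * x * comm c b = 0); first ncr.
by rewrite !defect_x_comm -defectDl -commDl defect_x_comm !subr0.
Qed.

Lemma comm_x_defect_l a b c x : comm c b * x * defect a b = 0.
Proof.
apply: (semiprime_sum0 (comm a b) (defect c b)) => [{}x|y]; last exact: defect_x_comm.
apply: etrans (_ : (comm a b + comm c b) * x * (defect a b + defect c b)
    - comm a b * x * defect a b - comm c b * x * defect c b = 0); first ncr.
by rewrite !comm_x_defect -defectDl -commDl comm_x_defect !subr0.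
Qed.

Lemma defect_x_comm_all a b c e x : defect a b * x * comm c e = 0.
Proof.
apply: (semiprime_sum0 (defect a e) (comm c b)) => [{}x|y]; last exact: comm_x_defect_l.
apply: etrans (_ : (defect a b + defect a e) * x * (comm c b + comm c e)
    - defect a b * x * comm c b - defect a e * x * comm c e = 0); first ncr.
by rewrite !defect_x_comm_l -defectDr -commDr defect_x_comm_l !subr0.
Qed.

Lemma defect_central a b y : y * defect a b = defect a b * y.
Proof.
apply/eqP; rewrite -subr_eq0; apply/eqP; apply: mul_semiprime => x.
have -> : (y * defect a b - defect a b * y) * x * (y * defect a b - defect a b * y) =
    y * (defect a b * x * comm y (defect a b))
    - defect a b * (y * x) * comm y (defect a b) by rewrite /comm; ncr.
by rewrite !defect_x_comm_all; ncr.
Qed.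

Lemma central_cube0 u : (forall y, y * u = u * y) -> u * u * u = 0 -> u = 0.
Proof.
move=> uC u3; have u2 : u * u = 0.
  apply: mul_semiprime => y.
  have uuC : u * u * y = y * u * u by rewrite -mulA -[u * y]uC mulA -[u * y]uC.
  have -> : u * u * y * (u * u) = y * (u * u * u) * u by rewrite uuC; ncr.
  by rewrite u3; ncr.
apply: mul_semiprime => y; have -> : u * y * u = y * (u * u) by rewrite -[u * y]uC mulA.
by rewrite u2; ncr.
Qed.

Lemma defect_cube0 a b : defect a b * defect a b * defect a b = 0.
Proof.
have uu : defect a b + defect a b = D (comm a b) - comm (D a) b - comm a (D b).
  by rewrite -{2}(opprK (defect a b)) -defectC /defect /comm !DB; ncr.
have u_comm p q : defect a b * comm p q = 0.
  by have := defect_x_comm_all a b p q one; rewrite mul1r.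
move: (defect a b) (defect_central a b) u_comm uu => u uC u_comm uu.
have uc := u_comm a b; have cu : comm a b * u = 0 by rewrite uC.
have uuDc : u * u * D (comm a b) = 0.
  have J := D_jordan u (comm a b); rewrite uc cu addr0 D0 in J.
  apply: two_torsion_free.
  have -> : u * u * D (comm a b) + u * u * D (comm a b) =
      u * (D u * comm a b + u * D (comm a b) + D (comm a b) * u + comm a b * D u)
      - (u * D u - D u * u) * comm a b - u * (D (comm a b) * u - u * D (comm a b))
      - (u * comm a b) * D u - D u * (u * comm a b) by ncr.
  by rewrite -J (uC (D u)) (uC (D (comm a b))) uc !subrr; ncr.
apply: two_torsion_free.
have -> : u * u * u + u * u * u = u * u * (u + u) by ncr.
rewrite uu; have -> : u * u * (D (comm a b) - comm (D a) b - comm a (D b)) =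
    u * u * D (comm a b) - u * (u * comm (D a) b) - u * (u * comm a (D b)) by ncr.
by rewrite uuDc !u_comm; ncr.
Qed.

Lemma D_mul x y : D (x * y) = D x * y + x * D y.
Proof.
have -> : D (x * y) = defect x y + (D x * y + x * D y) by rewrite /defect; ncr.
by rewrite (central_cube0 _ (defect_central x y) (defect_cube0 x y)) add0r.
Qed.

End JordanTripleDerivation.

Definition realRC (R : realType) (b : bool) : {rmorphism R -> RC R b} :=
  match b return {rmorphism R -> RC R b} with
  | true => real_complex R
  | false => idfun
  end.

Section RealScalars.
Context {R : realType} {b : bool}.
Local Notation K := (RC R b).
Local Notation realRC := (realRC R b).
Local Notation rabs := (@rabs R b).

Lemma realRCK : cancel realRC (@reRC R b).
Proof. by case: b. Qed.

Lemma realRC_reRC {z : K} : z \is Num.real -> realRC (reRC z) = z.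
Proof. by case: b z => //= z zr; rewrite RRe_real. Qed.

Lemma realRC_inj : injective realRC.
Proof. exact: can_inj realRCK. Qed.

Lemma ler_realRC (r s : R) : (realRC r <= realRC s) = (r <= s).
Proof. by case: b; rewrite //= lecE /= eqxx. Qed.

Lemma ltr_realRC (r s : R) : (realRC r < realRC s) = (r < s).
Proof. by case: b; rewrite //= ltcE /= eqxx. Qed.

Lemma normr_realRC (r : R) : `|realRC r| = realRC `|r|.
Proof. by case: b => //=; rewrite normc_def /= expr0n /= addr0 sqrtr_sqr. Qed.

Lemma norm_rabs (k : K) : `|k| = realRC (rabs k).
Proof. by rewrite /rabs realRC_reRC // normr_real. Qed.

Lemma rabs_ge0 k : 0 <= rabs k.
Proof. by rewrite -ler_realRC rmorph0 -norm_rabs. Qed.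

Lemma rabsM k l : rabs (k * l) = rabs k * rabs l.
Proof. by apply: realRC_inj; rewrite rmorphM -!norm_rabs normrM. Qed.

Lemma rabsV k : rabs k^-1 = (rabs k)^-1.
Proof. by apply: realRC_inj; rewrite fmorphV -!norm_rabs normfV. Qed.

Lemma rabsX k n : rabs (k ^+ n) = rabs k ^+ n.
Proof. by apply: realRC_inj; rewrite rmorphXn -!norm_rabs normrX. Qed.

Lemma RC_decomp : exists j : K,
  (j = 0 \/ j * j = -1) /\ forall z : K, exists s t : R, z = realRC s + j * realRC t.
Proof.
case: b => /=.
  exists 'i%C; split.
    right; apply/eqP; rewrite eq_complex /=.
    by rewrite ?mul0r ?mulr0 ?mul1r ?mulr1 ?add0r ?addr0 ?sub0r ?oppr0 ?eqxx.
  by move=> z; exists (complex.Re z), (complex.Im z); rewrite [LHS]complexE.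
by exists 0; split=> [|z]; [left | exists z, 0; rewrite mul0r addr0].
Qed.

Section Norm.
Context {X : completeNormedModType K}.
Local Notation rnorm := (@rnorm R b X).

Lemma norm_rnorm (x : X) : `|x| = realRC (rnorm x).
Proof. by rewrite /rnorm realRC_reRC // normr_real. Qed.

Lemma rnorm_ge0 (x : X) : 0 <= rnorm x.
Proof. by rewrite -ler_realRC rmorph0 -norm_rnorm. Qed.

Lemma ler_rnormD (x y : X) : rnorm (x + y) <= rnorm x + rnorm y.
Proof. by rewrite -ler_realRC rmorphD -!norm_rnorm ler_normD. Qed.

Lemma rnormZ k (x : X) : rnorm (k *: x) = rabs k * rnorm x.
Proof. by apply: realRC_inj; rewrite rmorphM -norm_rabs -!norm_rnorm normrZ. Qed.

Lemma rnormN (x : X) : rnorm (- x) = rnorm x.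
Proof. by apply: realRC_inj; rewrite -!norm_rnorm normrN. Qed.

Lemma ler_rnormB (x y : X) : rnorm (x - y) <= rnorm x + rnorm y.
Proof. by rewrite -(rnormN y) ler_rnormD. Qed.

Lemma rnorm_eq0 (x : X) : (rnorm x == 0) = (x == 0).
Proof. by rewrite -(inj_eq realRC_inj) rmorph0 -norm_rnorm normr_eq0. Qed.

Lemma rnorm0 : rnorm 0 = 0.
Proof. by apply/eqP; rewrite rnorm_eq0. Qed.

Lemma rnorm_le_eps_eq0 (x : X) (M : R) :
  (forall eps, 0 < eps -> rnorm x <= eps * M) -> x = 0.
Proof.
move=> small; apply/eqP; rewrite -rnorm_eq0 eq_le rnorm_ge0 andbT.
rewrite leNgt; apply/negP => x_gt0.
have M1_gt0 : 0 < `|M| + 1 by rewrite ltr_wpDl.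
have := small _ (divr_gt0 x_gt0 M1_gt0).
have : rnorm x / (`|M| + 1) * (`|M| + 1) = rnorm x by rewrite divfK // gt_eqF.
have := ler_norm M; nra.
Qed.

Lemma rnorm_cvgnP (u : nat -> X) (l : X) : u @ \oo --> l <->
  forall eps : R, 0 < eps -> exists N, forall n, (N <= n)%N -> rnorm (l - u n) < eps.
Proof.
split=> [/cvgrPdist_lt ul eps eps_gt0 | ul].
  have [N _ lN] := ul (realRC eps) ltac:(by rewrite -(rmorph0 realRC) ltr_realRC).
  by exists N => n Nn; rewrite -ltr_realRC -norm_rnorm; apply: lN.
apply/cvgrPdist_lt => eps eps_gt0.
have eps_real : eps \is Num.real by apply: gtr0_real.
have [|N lN] := ul (reRC eps); first by rewrite -ltr_realRC rmorph0 realRC_reRC.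
by exists N => // n Nn; rewrite /= norm_rnorm -(realRC_reRC eps_real) ltr_realRC lN.
Qed.

End Norm.

Lemma is_cvgn_of_dominated_steps (X : completeNormedModType K) (u : nat -> X)
    (t : nat -> R) :
  (forall n, rnorm (u n.+1 - u n) <= t n) -> cvgn (series t) -> cvgn u.
Proof.
move=> ut ct; have -> : u = cst (u 0%N) + series (telescope u).
  by apply/funext => n /=; rewrite [LHS]eq_sum_telescope.
apply: is_cvgD; first exact: is_cvg_cst.
apply/cauchy_cvgP/cauchy_seriesP => eps eps_gt0.
have eps_real : eps \is Num.real by apply: gtr0_real.
have t_cauchy : cauchy (series t @ \oo) by apply/cauchy_cvgP.
have eps_gt0' : 0 < reRC eps by rewrite -ltr_realRC rmorph0 realRC_reRC.
apply: filterS ((cauchy_seriesP t).1 t_cauchy _ eps_gt0') => -[m n] /= tmn.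
rewrite (le_lt_trans (ler_norm_sum _ _ _)) //.
apply: (@le_lt_trans _ _ (realRC (\sum_(m <= k < n) t k))).
  by rewrite rmorph_sum ler_sum // => k _; rewrite norm_rnorm ler_realRC ut.
by rewrite -(realRC_reRC eps_real) ltr_realRC (le_lt_trans (ler_norm _)).
Qed.

Lemma continuous_ratr0_realRC {X : completeNormedModType K} {f : K -> X} :
  continuous f -> (forall q : rat, f (ratr q) = 0) -> forall r : R, f (realRC r) = 0.
Proof.
move=> f_cont f_rat r; apply/eqP/negPn/negP => fr_neq0.
have fr_gt0 : 0 < rnorm (f (realRC r)) by rewrite lt_def rnorm_eq0 fr_neq0 rnorm_ge0.
have /cvgrPdist_lt/(_ (realRC (rnorm (f (realRC r))))) := f_cont (realRC r).
rewrite -(rmorph0 realRC) ltr_realRC => /(_ fr_gt0) /nbhs_normP[del del_gt0 near_r].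
have del_real : del \is Num.real by apply: gtr0_real.
have [|q] := @rat_in_itvoo R (r - reRC del) (r + reRC del).
  by rewrite ltrD2l gtrN // -ltr_realRC rmorph0 realRC_reRC.
rewrite in_itv /= => /andP[q_gt q_lt].
have := near_r (ratr q); rewrite /= -(fmorph_rat realRC) -rmorphB normr_realRC.
rewrite -(realRC_reRC del_real) ltr_realRC ltr_norml.
have -> : (- reRC del < r - ratr q < reRC del) = true by apply/andP; split; lra.
by move=> /(_ isT); rewrite fmorph_rat f_rat subr0 norm_rnorm ltr_realRC ltxx.
Qed.

End RealScalars.

Lemma limn_einf0_frequently {R : realType} {f : nat -> R} {eps : R} :
  limn_einf (fun k => (f k)%:E) = 0%E ->
  0 < eps -> forall N, exists2 k, (N <= k)%N & f k < eps.
Proof.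
move=> f0 eps_gt0 N.
have : (einfs (fun k => (f k)%:E) N < eps%:E)%E.
  apply: (@le_lt_trans _ _ 0%E); last by rewrite lte_fin.
  rewrite -f0 limn_einf_lim.
  have /ereal_nondecreasing_cvgn/cvg_lim -> // := nondecreasing_einfs (fun k => (f k)%:E).
  by apply: ereal_sup_ubound; exists N.
by move=> /ereal_inf_lt[_ [k /= Nk <-]]; rewrite lte_fin; exists k.
Qed.

Lemma nneseries_fin_is_cvgn (R : realType) (t : nat -> R) :
  (forall k, 0 <= t k) -> (\sum_(0 <= k <oo) (t k)%:E < +oo)%E -> cvgn (series t).
Proof.
move=> t_ge0 t_fin; rewrite seriesEnat; apply: nondecreasing_is_cvgn.
  by apply: nondecreasing_series => k _ _; apply: t_ge0.
have s_ge0 : (0 <= \sum_(0 <= k <oo) (t k)%:E)%E.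
  by apply: nneseries_ge0 => k _ _; rewrite lee_fin.
exists (fine (\sum_(0 <= k <oo) (t k)%:E)) => _ [n _ <-].
rewrite -lee_fin fineK ?ge0_fin_numE // /= -sumEFin.
by apply: nneseries_lim_ge => k _ _; rewrite lee_fin.
Qed.

Lemma addv_self_eq0 (K : numFieldType) (V : lmodType K) (v : V) : v + v = 0 -> v = 0.
Proof.
move=> vv; have : (2%:R : K) *: v = 0 by rewrite scaler_nat mulr2n.
by move/eqP; rewrite scaler_eq0 pnatr_eq0 => /eqP.
Qed.

Section ScalarDerivation.
Context {R : realType} {b : bool} {X : completeNormedModType (RC R b)}.
Context {g : RC R b -> X}.
Hypothesis gD : forall s t, g (s + t) = g s + g t.
Hypothesis gM : forall s t, g (s * t) = t *: g s + s *: g t.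
Hypothesis g_cont : continuous g.

Let g0 : g 0 = 0.
Proof. by apply: (addrI (g 0)); rewrite -gD !addr0. Qed.

Let gN s : g (- s) = - g s.
Proof. by apply/eqP; rewrite -addr_eq0 -gD addNr g0. Qed.

Let g1 : g 1 = 0.
Proof. by apply: (addrI (g 1)); rewrite addr0 -{3}(mulr1 1) gM scale1r. Qed.

Let g_natr n : g n%:R = 0.
Proof. by elim: n => [|n IHn]; rewrite ?g0 // mulrS gD g1 IHn addr0. Qed.

Let g_intr z : g z%:~R = 0.
Proof.
by case: z => n; [rewrite -pmulrn g_natr | rewrite NegzE mulrNz -pmulrn gN g_natr oppr0].
Qed.

Let g_ratr q : g (ratr q) = 0.
Proof.
have den_neq0 : (denq q)%:~R != 0 :> RC R b by rewrite intr_eq0 denq_neq0.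
have := gM (ratr q) (denq q)%:~R; rewrite /ratr divfK // !g_intr scaler0 addr0.
by move=> /esym/eqP; rewrite scaler_eq0 (negbTE den_neq0) => /eqP.
Qed.

Lemma derivation_RC_eq0 m : g m = 0.
Proof.
have g_real := continuous_ratr0_realRC g_cont g_ratr.
have [j [[->|jj] decomp]] := @RC_decomp R b.
  by have [s [t ->]] := decomp m; rewrite mul0r addr0 g_real.
have gj : g j = 0.
  have : j *: (g j + g j) = 0 by rewrite scalerDr -gM jj gN g1 oppr0.
  move/eqP; rewrite scaler_eq0 => /orP[/eqP j0|/eqP]; last exact: addv_self_eq0.
  by move: jj; rewrite j0 mul0r => /eqP; rewrite eq_sym oppr_eq0 oner_eq0.
have [s [t ->]] := decomp m.
by rewrite gD gM gj !g_real !scaler0 !addr0.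
Qed.

End ScalarDerivation.

Section HyersLimit.
Variables (R : realType) (b : bool) (X : completeNormedModType (RC R b)).
Variables (mul : X -> X -> X) (one : X) (h : X -> X) (phi psi : X -> X -> R).
Variables (a b0 A B xi : RC R b) (Lam : set (RC R b)).
Local Notation K := (RC R b).
Local Notation rnorm := (@rnorm R b X).
Local Notation rabs := (@rabs R b).
Local Notation "x ** y" := (mul x y) (at level 40, left associativity).

Hypothesis BA : banach_algebra mul one.
Hypothesis X_semiprime : semiprime mul.
Hypothesis psi_bound : forall x y,
  rnorm (h (x ** y ** x) - h x ** y ** x - x ** h y ** x - x ** y ** h x) <= psi x y.
Hypothesis phi_bound : forall x y l, Lam l ->
  rnorm (h ((l * a) *: x + b0 *: y) - (l * A) *: h x - B *: h y) <= phi x y.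
Hypothesis ab_neq0 : a * b0 != 0.
Hypothesis Lam_xi : Lam xi.
Hypothesis xi_neq0 : xi != 0.
Hypothesis xiA_B : xi * A + B = xi * a + b0.
Local Notation d := (xi * a + b0).
Hypothesis d_neq0 : d != 0.
Hypothesis d_neq1 : d != 1.
Hypothesis phi_summable : forall x, (\sum_(0 <= k <oo)
  ((rabs d) ^- k.+1 * phi (d ^+ k *: x) (d ^+ k *: x))%:E < +oo)%E.
Hypothesis liminf_phi : forall x y,
  limn_einf (fun k => ((rabs d) ^- k * phi (d ^+ k *: x) (d ^+ k *: y))%:E) = 0%E.
Hypothesis liminf_psi3 : forall x y,
  limn_einf (fun k => ((rabs d) ^- (3 * k) * psi (d ^+ k *: x) (d ^+ k *: y))%:E) = 0%E.
Hypothesis liminf_psi2 : forall x y,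
  limn_einf (fun k => ((rabs d) ^- (2 * k) * psi (d ^+ k *: x) y)%:E) = 0%E.

Let mulA := ba_mulA BA.
Let mul1l := ba_mul1l BA.
Let mul1r := ba_mul1r BA.
Let mulZl := ba_scalerAl BA.
Let mulZr := ba_scalerAr BA.

#[local] Instance X_ring_ops : Ncring.Ring_ops := @ring_ops X mul one.
#[local] Instance X_ring : Ncring.Ring := @ring_laws X mul one mulA mul1l mul1r
  (ba_mulDl BA) (ba_mulDr BA).
Ltac ncr := Ncring_tac.non_commutative_ring.

Lemma ler_rnormM x y : rnorm (x ** y) <= rnorm x * rnorm y.
Proof.
by rewrite -(@ler_realRC _ b) rmorphM -!norm_rnorm; exact: (ba_normM BA x y).
Qed.

Lemma ler_rnormM3 x y z : rnorm (x ** y ** z) <= rnorm x * rnorm y * rnorm z.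
Proof.
apply: le_trans (ler_rnormM _ _) _; rewrite ler_wpM2r ?rnorm_ge0 //; exact: ler_rnormM.
Qed.

Lemma mulZ3 s t r x y z : (s *: x) ** (t *: y) ** (r *: z) = (s * t * r) *: (x ** y ** z).
Proof. by rewrite !(mulZl, mulZr) !scalerA [s * t * r]mulrC mulrA. Qed.

Definition hyers n z := d ^- n *: h (d ^+ n *: z).
Definition hlim z := limn (hyers ^~ z).

Lemma h_dpow n z : h (d ^+ n *: z) = d ^+ n *: hyers n z.
Proof. by rewrite /hyers scalerA mulfV ?expf_neq0 // scale1r. Qed.

Lemma hyers0 z : hyers 0 z = h z.
Proof. by rewrite /hyers expr0 invr1 !scale1r. Qed.

Lemma hyers_step z n :
  rnorm (hyers n.+1 z - hyers n z) <= rabs d ^- n.+1 * phi (d ^+ n *: z) (d ^+ n *: z).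
Proof.
have dSz : d ^+ n.+1 *: z = (xi * a) *: (d ^+ n *: z) + b0 *: (d ^+ n *: z).
  by rewrite -scalerDl scalerA -exprS.
have -> : hyers n.+1 z - hyers n z = d ^- n.+1 *: (h ((xi * a) *: (d ^+ n *: z)
    + b0 *: (d ^+ n *: z)) - (xi * A) *: h (d ^+ n *: z) - B *: h (d ^+ n *: z)).
  rewrite -addrA -opprD -[(xi * A) *: _ + _]scalerDl xiA_B -dSz scalerBr scalerA.
  suff -> : d ^- n.+1 * d = d ^- n by [].
  by rewrite exprS invfM mulrAC mulVf // div1r.
rewrite rnormZ rabsV rabsX ler_wpM2l ?phi_bound //.
by rewrite invr_ge0 exprn_ge0 // rabs_ge0.
Qed.

Lemma hyers_cvgn z : cvgn (hyers ^~ z).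
Proof.
apply: is_cvgn_of_dominated_steps (hyers_step z) _.
apply: nneseries_fin_is_cvgn (phi_summable z) => k.
rewrite mulr_ge0 ?invr_ge0 ?exprn_ge0 ?rabs_ge0 //.
exact: le_trans (rnorm_ge0 _) (phi_bound _ _ _ Lam_xi).
Qed.

Lemma hyers_approx z {eps : R} : 0 < eps ->
  exists N, forall n, (N <= n)%N -> rnorm (hlim z - hyers n z) < eps.
Proof. by move: eps; apply/rnorm_cvgnP; exact: hyers_cvgn. Qed.

Lemma hyers_triple n m x y :
  d ^- (2 * n + m) *: (h ((d ^+ n *: x) ** (d ^+ m *: y) ** (d ^+ n *: x))
    - h (d ^+ n *: x) ** (d ^+ m *: y) ** (d ^+ n *: x)
    - (d ^+ n *: x) ** h (d ^+ m *: y) ** (d ^+ n *: x)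
    - (d ^+ n *: x) ** (d ^+ m *: y) ** h (d ^+ n *: x))
  = hyers (2 * n + m) (x ** y ** x) - hyers n x ** y ** x - x ** hyers m y ** x
    - x ** y ** hyers n x.
Proof.
have dN : d ^+ n * d ^+ m * d ^+ n = d ^+ (2 * n + m).
  by rewrite -!exprD; congr (_ ^+ _); lia.
by rewrite !h_dpow !mulZ3 dN h_dpow -!scalerBr scalerA mulVf ?expf_neq0 // scale1r.
Qed.

Lemma hlim_triple_le n m x y w :
  rnorm (hlim (x ** y ** x) - hlim x ** y ** x - x ** w ** x - x ** y ** hlim x) <=
  rabs d ^- (2 * n + m) * psi (d ^+ n *: x) (d ^+ m *: y)
  + rnorm (hlim (x ** y ** x) - hyers (2 * n + m) (x ** y ** x))
  + rnorm (hlim x - hyers n x) * rnorm y * rnorm x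
  + rnorm x * rnorm (w - hyers m y) * rnorm x
  + rnorm x * rnorm y * rnorm (hlim x - hyers n x).
Proof.
have -> : hlim (x ** y ** x) - hlim x ** y ** x - x ** w ** x - x ** y ** hlim x =
    (hyers (2 * n + m) (x ** y ** x) - hyers n x ** y ** x - x ** hyers m y ** x
      - x ** y ** hyers n x)
    + (hlim (x ** y ** x) - hyers (2 * n + m) (x ** y ** x))
    - (hlim x - hyers n x) ** y ** x - x ** (w - hyers m y) ** x
    - x ** y ** (hlim x - hyers n x) by ncr.
rewrite -hyers_triple.
apply: le_trans (ler_rnormB _ _) _; rewrite lerD ?ler_rnormM3 //.
apply: le_trans (ler_rnormB _ _) _; rewrite lerD ?ler_rnormM3 //.
apply: le_trans (ler_rnormB _ _) _; rewrite lerD ?ler_rnormM3 //.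
apply: le_trans (ler_rnormD _ _) _; rewrite lerD // rnormZ rabsV rabsX ler_wpM2l //.
by rewrite invr_ge0 exprn_ge0 // rabs_ge0.
Qed.

Lemma hlim_triple_h x y :
  hlim (x ** y ** x) = hlim x ** y ** x + x ** h y ** x + x ** y ** hlim x.
Proof.
apply/subr0_eq; rewrite !opprD !addrA.
apply: (rnorm_le_eps_eq0 _ (2 + 2 * (rnorm x * rnorm y))) => eps eps_gt0.
have [N1 HN1] := hyers_approx x eps_gt0.
have [N2 HN2] := hyers_approx (x ** y ** x) eps_gt0.
have [k Nk psi_k] := limn_einf0_frequently (liminf_psi2 x y) eps_gt0 (N1 + N2).
have := hlim_triple_le k 0 x y (h y).
rewrite hyers0 subrr rnorm0 mulr0 mul0r addr0 addn0 expr0 scale1r.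
have := HN1 k ltac:(lia); have := HN2 (2 * k)%N ltac:(lia).
have := mulr_ge0 (rnorm_ge0 x) (rnorm_ge0 y).
nra.
Qed.

Lemma hlim_triple x y :
  hlim (x ** y ** x) = hlim x ** y ** x + x ** hlim y ** x + x ** y ** hlim x.
Proof.
apply/subr0_eq; rewrite !opprD !addrA.
apply: (rnorm_le_eps_eq0 _ (2 + 2 * (rnorm x * rnorm y) + rnorm x * rnorm x))
  => eps eps_gt0.
have [N1 HN1] := hyers_approx x eps_gt0.
have [N2 HN2] := hyers_approx y eps_gt0.
have [N3 HN3] := hyers_approx (x ** y ** x) eps_gt0.
have [k Nk psi_k] := limn_einf0_frequently (liminf_psi3 x y) eps_gt0 (N1 + N2 + N3).
have := hlim_triple_le k k x y (hlim y).
rewrite (_ : 2 * k + k = 3 * k)%N; last by lia.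
have := HN1 k ltac:(lia); have := HN2 k ltac:(lia); have := HN3 (3 * k)%N ltac:(lia).
have := mulr_ge0 (rnorm_ge0 x) (rnorm_ge0 y); have := mulr_ge0 (rnorm_ge0 x) (rnorm_ge0 x).
nra.
Qed.

Lemma h_hlim y : h y = hlim y.
Proof.
have := hlim_triple_h one y; have := hlim_triple one y.
rewrite !mul1l !mul1r => E E_h.
by apply: (addrI (hlim one ** y)); apply: (addIr (y ** hlim one)); rewrite -E_h -E.
Qed.

Lemma hyers_funeq n l x y :
  d ^- n *: (h ((l * a) *: (d ^+ n *: x) + b0 *: (d ^+ n *: y))
    - (l * A) *: h (d ^+ n *: x) - B *: h (d ^+ n *: y))
  = hyers n ((l * a) *: x + b0 *: y) - (l * A) *: hyers n x - B *: hyers n y.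
Proof.
have scalerC (s t : K) (v : X) : s *: (t *: v) = t *: (s *: v).
  by rewrite !scalerA mulrC.
rewrite (scalerC (l * a)) (scalerC b0) -scalerDr !h_dpow (scalerC (l * A)) (scalerC B).
by rewrite -!scalerBr scalerA mulVf ?expf_neq0 // scale1r.
Qed.

Lemma hlim_funeq_le n l x y : Lam l ->
  rnorm (hlim ((l * a) *: x + b0 *: y) - (l * A) *: hlim x - B *: hlim y) <=
  rabs d ^- n * phi (d ^+ n *: x) (d ^+ n *: y)
  + rnorm (hlim ((l * a) *: x + b0 *: y) - hyers n ((l * a) *: x + b0 *: y))
  + rabs (l * A) * rnorm (hlim x - hyers n x) + rabs B * rnorm (hlim y - hyers n y).
Proof.
move=> Lam_l; set w := (l * a) *: x + b0 *: y.
have -> : hlim w - (l * A) *: hlim x - B *: hlim y =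
    (hyers n w - (l * A) *: hyers n x - B *: hyers n y) + (hlim w - hyers n w)
    - (l * A) *: (hlim x - hyers n x) - B *: (hlim y - hyers n y).
  by rewrite !scalerBr; ncr.
rewrite -hyers_funeq.
apply: le_trans (ler_rnormB _ _) _; rewrite rnormZ lerD //.
apply: le_trans (ler_rnormB _ _) _; rewrite rnormZ lerD //.
apply: le_trans (ler_rnormD _ _) _; rewrite lerD // rnormZ rabsV rabsX ler_wpM2l ?phi_bound //.
by rewrite invr_ge0 exprn_ge0 // rabs_ge0.
Qed.

Lemma h_funeq l x y : Lam l ->
  h ((l * a) *: x + b0 *: y) = (l * A) *: h x + B *: h y.
Proof.
move=> Lam_l; rewrite !h_hlim; apply/subr0_eq; rewrite opprD addrA.
apply: (rnorm_le_eps_eq0 _ (2 + rabs (l * A) + rabs B)) => eps eps_gt0.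
have [N1 HN1] := hyers_approx ((l * a) *: x + b0 *: y) eps_gt0.
have [N2 HN2] := hyers_approx x eps_gt0.
have [N3 HN3] := hyers_approx y eps_gt0.
have [k Nk phi_k] := limn_einf0_frequently (liminf_phi x y) eps_gt0 (N1 + N2 + N3).
have := hlim_funeq_le k _ x y Lam_l.
have := HN1 k ltac:(lia); have := HN2 k ltac:(lia); have := HN3 k ltac:(lia).
have := rabs_ge0 (l * A); have := rabs_ge0 B.
nra.
Qed.

Lemma h0 : h 0 = 0.
Proof.
have := h_funeq _ 0 0 Lam_xi; rewrite !scaler0 addr0 -scalerDl xiA_B.
move=> /eqP; rewrite -subr_eq0 -{1}[h 0]scale1r -scalerBl scaler_eq0 subr_eq0.
by rewrite eq_sym (negbTE d_neq1) => /eqP.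
Qed.

Lemma hD x y : h (x + y) = h x + h y.
Proof.
have b0_neq0 : b0 != 0 by apply: contraNneq ab_neq0 => ->; rewrite mulr0.
have xia_neq0 : xi * a != 0.
  by rewrite mulf_neq0 //; apply: contraNneq ab_neq0 => ->; rewrite mul0r.
have [x' ->] : exists x', x = (xi * a) *: x'.
  by exists ((xi * a)^-1 *: x); rewrite scalerA mulfV // scale1r.
have [y' ->] : exists y', y = b0 *: y'.
  by exists (b0^-1 *: y); rewrite scalerA mulfV // scale1r.
have := h_funeq _ x' 0 Lam_xi; have := h_funeq _ 0 y' Lam_xi.
rewrite !scaler0 ?addr0 ?add0r h0 !scaler0 ?addr0 ?add0r => -> ->.
exact: h_funeq.
Qed.

Lemma h_triple x y : h (x ** y ** x) = h x ** y ** x + x ** h y ** x + x ** y ** h x.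
Proof. by rewrite !h_hlim; apply: hlim_triple. Qed.

Lemma hM x y : h (x ** y) = h x ** y + x ** h y.
Proof.
exact: (@D_mul X mul one mulA mul1l mul1r (ba_mulDl BA) (ba_mulDr BA)
  X_semiprime (@addv_self_eq0 _ X) h hD h_triple).
Qed.

Lemma h_derivation : derivation mul h.
Proof. by split; [apply: hD | apply: hM]. Qed.

Section Linearity.
Variable Lam0 : set K.
Hypothesis Lam0_sub : Lam0 `<=` Lam.
Hypothesis Lam0_bounded : bounded_scalars Lam0.
Hypothesis Lam0_BF : in_BF X Lam0.

Let g m := h (m *: one).

Let gD s t : g (s + t) = g s + g t.
Proof. by rewrite /g scalerDl hD. Qed.

Let gM s t : g (s * t) = t *: g s + s *: g t.
Proof.
rewrite /g; have -> : (s * t) *: one = (s *: one) ** (t *: one).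
  by rewrite mulZl mulZr mul1l scalerA.
by rewrite hM mulZr mul1r mulZl mul1l.
Qed.

Let g_cont : continuous g.
Proof.
apply: Lam0_BF; first exact: gD.
have a_neq0 : a != 0 by apply: contraNneq ab_neq0 => ->; rewrite mul0r.
have [M Lam0_M] := Lam0_bounded.
exists (M * rabs A * rnorm (h (a^-1 *: one))) => l Lam0_l.
have := h_funeq _ (a^-1 *: one) 0 (Lam0_sub _ Lam0_l).
rewrite scaler0 addr0 h0 scaler0 addr0 scalerA -mulrA mulfV // mulr1 /g => ->.
by rewrite rnormZ rabsM !ler_wpM2r ?rabs_ge0 ?rnorm_ge0 ?Lam0_M.
Qed.

Lemma hZ l x : h (l *: x) = l *: h x.
Proof.
have -> : l *: x = (l *: one) ** x by rewrite mulZl mul1l.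
have := derivation_RC_eq0 gD gM g_cont l; rewrite /g hM => ->.
by rewrite mulZl mul1l; ncr.
Qed.

Lemma h_linear_derivation : linear_derivation mul h.
Proof. by split; [apply: h_derivation | apply: hZ]. Qed.

End Linearity.

Lemma h_derivation_linear : derivation mul h /\
  ((exists Lam0, [/\ Lam0 `<=` Lam, bounded_scalars Lam0 & in_BF X Lam0]) ->
   linear_derivation mul h).
Proof.
split=> [|[Lam0 [Lam0_sub Lam0_bounded Lam0_BF]]]; first exact: h_derivation.
exact: h_linear_derivation Lam0_sub Lam0_bounded Lam0_BF.
Qed.

End HyersLimit.

Arguments h_derivation_linear {R b X mul one h phi psi a b0 A B xi Lam}.


Theorem corollary2p5 (R : realType) (b : bool) (X : completeNormedModType (RC R b))
  (mul : X -> X -> X) (one : X)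
  (h : X -> X) (phi psi : X -> X -> R)
  (a b0 A B : RC R b) (Lam : set (RC R b)) :
  banach_algebra mul one ->
  semiprime mul ->
  (forall x y, 0 <= phi x y) -> (forall x y, 0 <= psi x y) ->
  (forall x y : X,
     rnorm (h (mul (mul x y) x) - mul (mul (h x) y) x - mul (mul x (h y)) x
             - mul (mul x y) (h x))
       <= psi x y) ->
  (forall (x y : X) (l : RC R b), Lam l ->
     rnorm (h ((l * a) *: x + b0 *: y) - (l * A) *: h x - B *: h y)
       <= phi x y) ->
  a * b0 != 0 ->
  Lam !=set0 ->
  (exists xi : RC R b,
     [/\ Lam xi, xi != 0, xi * A + B = xi * a + b0 &
       let d := xi * a + b0 in
       [/\ d != 0, d != 1 &
        forall x y : X,
        [/\ (\sum_(0 <= k <oo)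
               ((rabs d) ^- k.+1 * phi (d ^+ k *: x) (d ^+ k *: x))%:E
               < +oo)%E,
            limn_einf (fun k =>
               ((rabs d) ^- k * phi (d ^+ k *: x) (d ^+ k *: y))%:E) = 0%E,
            limn_einf (fun k =>
               ((rabs d) ^- (3 * k) * psi (d ^+ k *: x) (d ^+ k *: y))%:E)
               = 0%E &
            limn_einf (fun k =>
               ((rabs d) ^- (2 * k) * psi (d ^+ k *: x) y)%:E) = 0%E]]]) ->
  derivation mul h /\
  ((exists Lam0 : set (RC R b),
      [/\ Lam0 `<=` Lam, bounded_scalars Lam0 & in_BF X Lam0]) ->
   linear_derivation mul h).
Proof.
(* Nonnegativity of [phi] and [psi] follows from the bounds, and [xi]
   witnesses [Lam !=set0]. *)
move=> BA X_semiprime _ _ psi_bound phi_bound ab_neq0 _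
  [xi [Lam_xi xi_neq0 xiA_B /= [d_neq0 d_neq1 growth]]].
have phi_summable x := let: And4 s _ _ _ := growth x x in s.
have liminf_phi x y := let: And4 _ l _ _ := growth x y in l.
have liminf_psi3 x y := let: And4 _ _ l _ := growth x y in l.
have liminf_psi2 x y := let: And4 _ _ _ l := growth x y in l.
exact: (h_derivation_linear BA X_semiprime psi_bound phi_bound ab_neq0 Lam_xi
  xi_neq0 xiA_B d_neq0 d_neq1 phi_summable liminf_phi liminf_psi3 liminf_psi2).
Qed.
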